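(* Let $\Lambda_{TU}=\{(F(x),\Lambda_x,v(x))\}_{x\in X}$ and $\Gamma_{TU}=\{(G(x),\Gamma_x,v(x))\}_{x\in X}$ be continuous $(T,U)$-controlled $g$-fusion frames for $H$ with bounds $A_1,B_1$ and $A_2,B_2$ and frame operators $S_C$ and $S_{C'}$ respectively, and assume $S_C^{-1}$ and $S_{C'}^{-1}$ each commute with both $T$ and $U$. Let $\Delta_{TU}=\{(X(x),\Delta_x,v(x))\}_{x\in X}$ with $X(x)=S_C^{-1}F(x)$, $\Delta_x=\Lambda_xP_{F(x)}S_C^{-1}$, and $\Theta_{TU}=\{(Y(x),\Theta_x,v(x))\}_{x\in X}$ with $Y(x)=S_{C'}^{-1}G(x)$, $\Theta_x=\Gamma_xP_{G(x)}S_{C'}^{-1}$, be their canonical duals. If there is $D>0$ such that for every $f\in H$ $$\Big|\int_X v(x)^2\big(\langle\Lambda_xP_{F(x)}Uf,\Lambda_xP_{F(x)}Tf\rangle-\langle\Gamma_xP_{G(x)}Uf,\Gamma_xP_{G(x)}Tf\rangle\big)\,d\mu(x)\Big|\le D\|f\|^2,$$ then for every $f\in H$ $$\Big|\int_X v(x)^2\big(\langle\Delta_xP_{X(x)}Uf,\Delta_xP_{X(x)}Tf\rangle-\langle\Theta_xP_{Y(x)}Uf,\Theta_xP_{Y(x)}Tf\rangle\big)\,d\mu(x)\Big|\le\frac{D}{A_1A_2}\|f\|^2.$$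
   Context: $H$ is a separable complex Hilbert space, $\mathcal{B}(H)$ the bounded operators on $H$, $\mathcal{GB}^+(H)$ the positive bounded operators on $H$ with bounded inverse, $P_M$ the orthogonal projection onto a closed subspace $M$. Let $(X,\mu)$ be a measure space, $\{K_x\}_{x\in X}$ Hilbert spaces, $v:X\to\mathbb{R}^+$ measurable, $F,G$ maps from $X$ to closed subspaces of $H$ with $x\mapsto P_{F(x)}f$, $x\mapsto P_{G(x)}f$ weakly measurable for all $f$, $\Lambda_x\in\mathcal{B}(F(x),K_x)$, $\Gamma_x\in\mathcal{B}(G(x),K_x)$, and $T,U\in\mathcal{GB}^+(H)$. A family $\{(F(x),\Lambda_x,v(x))\}$ is a continuous $(T,U)$-controlled $g$-fusion frame for $H$ with bounds $0<A\le B<\infty$ if $A\|f\|^2\le\int_X v(x)^2\langle\Lambda_xP_{F(x)}Uf,\Lambda_xP_{F(x)}Tf\rangle d\mu(x)\le B\|f\|^2$ for all $f\in H$. Its frame operator $S_C\in\mathcal{B}(H)$ is given by $\langle S_Cf,g\rangle=\int_X v(x)^2\langle T^*P_{F(x)}\Lambda_x^*\Lambda_xP_{F(x)}Uf,g\rangle d\mu(x)$; it satisfies $AI_H\le S_C\le BI_H$. The canonical dual of such a frame (when $S_C^{-1}$ commutes with $T$ and $U$) is the family $\{(S_C^{-1}F(x),\Lambda_xP_{F(x)}S_C^{-1},v(x))\}_{x\in X}$, the operator being restricted to $S_C^{-1}F(x)$. *)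

From HB Require Import structures.
From mathcomp Require Import all_boot all_order all_algebra.
From mathcomp Require Import all_classical all_reals all_analysis.
From mathcomp Require Import complex.
Set Implicit Arguments.
Unset Strict Implicit.
Unset Printing Implicit Defensive.
Import Order.TTheory GRing.Theory Num.Theory.
Local Open Scope ring_scope.
Local Open Scope classical_set_scope.

Record preH (R : realType) := PreH {
  pcar :> lmodType R[i];
  pip : pcar -> pcar -> R[i];
  pip_linl : forall (a : R[i]) (x y z : pcar), pip (a *: x + y) z = a * pip x z + pip y z;
  pip_conj : forall x y : pcar, pip x y = Num.conj (pip y x);
  pip_ge0 : forall x : pcar, 0 <= pip x x;
  pip_eq0 : forall x : pcar, pip x x = 0 -> x = 0
}.
Arguments pip {R P} : rename.

Definition hnorm (R : realType) (H : preH R) (x : H) : R :=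
  Num.sqrt (complex.Re (pip x x)).

Definition hcauchy (R : realType) (H : preH R) (u : nat -> H) : Prop :=
  forall e : R, 0 < e -> exists N : nat,
    forall m n : nat, (N <= m)%N -> (N <= n)%N -> hnorm (u m - u n) < e.

Definition hconv (R : realType) (H : preH R) (u : nat -> H) (l : H) : Prop :=
  forall e : R, 0 < e -> exists N : nat, forall n : nat, (N <= n)%N -> hnorm (u n - l) < e.

Record hilbert (R : realType) := Hilbert {
  hpre :> preH R;
  hcomplete : forall u : nat -> hpre, hcauchy u -> exists l, hconv u l;
  hseparable : exists d : nat -> hpre,
      forall (f : hpre) (e : R), 0 < e -> exists n, hnorm (f - d n) < e
}.

Definition closed_subspace (R : realType) (H : preH R) (M : set H) : Prop :=
  [/\ M 0,
      (forall (a : R[i]) (x y : H), M x -> M y -> M (a *: x + y)) &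
      (forall (u : nat -> H) (l : H), (forall n, M (u n)) -> hconv u l -> M l)].

(* orthogonal projection P_M f : the unique p in M with f - p orthogonal to M
   (exists and is unique when M is a closed subspace of a Hilbert space) *)
Definition orth_proj (R : realType) (H : preH R) (M : set H) (f : H) : H :=
  xget (0 : H) [set p | M p /\ forall g, M g -> pip (f - p) g = 0].

Definition bounded_op (R : realType) (H1 H2 : preH R) (L : H1 -> H2) : Prop :=
  (forall (a : R[i]) (x y : H1), L (a *: x + y) = a *: L x + L y) /\
  exists M : R, forall x, hnorm (L x) <= M * hnorm x.

Definition GBplus (R : realType) (H : preH R) (T : H -> H) : Prop :=
  [/\ bounded_op T,
      (forall f, 0 <= pip (T f) f) &
      exists Ti : H -> H, [/\ bounded_op Ti, cancel T Ti & cancel Ti T]].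

Definition RtoC (R : realType) (r : R) : R[i] := Complex r 0.

Definition cintegrable (R : realType) d (X : measurableType d)
    (mu : {measure set X -> \bar R}) (g : X -> R[i]) : Prop :=
  mu.-integrable setT (fun x => (complex.Re (g x))%:E) /\
  mu.-integrable setT (fun x => (complex.Im (g x))%:E).

Definition cint (R : realType) d (X : measurableType d)
    (mu : {measure set X -> \bar R}) (g : X -> R[i]) : R[i] :=
  Complex (Rintegral mu setT (fun x => complex.Re (g x)))
          (Rintegral mu setT (fun x => complex.Im (g x))).

Definition gff_integrand (R : realType) (H : hilbert R) d (X : measurableType d)
    (K : X -> hilbert R) (F : X -> set H) (Lam : forall x, H -> K x)
    (v : X -> R) (T U : H -> H) (f g : H) (x : X) : R[i] :=
  RtoC (v x ^+ 2) * pip (Lam x (orth_proj (F x) (U f))) (Lam x (orth_proj (F x) (T g))).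

Definition gf_family (R : realType) (H : hilbert R) d (X : measurableType d)
    (K : X -> hilbert R) (F : X -> set H) (Lam : forall x, H -> K x)
    (v : X -> R) : Prop :=
  [/\ (forall x, closed_subspace (F x)),
      (forall x, bounded_op (Lam x)),
      measurable_fun setT v, (forall x, 0 < v x) &
      (forall f g : H,
          measurable_fun setT (fun x => complex.Re (pip (orth_proj (F x) f) g)) /\
          measurable_fun setT (fun x => complex.Im (pip (orth_proj (F x) f) g)))].

Definition cgf_frame (R : realType) (H : hilbert R) d (X : measurableType d)
    (mu : {measure set X -> \bar R})
    (K : X -> hilbert R) (F : X -> set H) (Lam : forall x, H -> K x)
    (v : X -> R) (T U : H -> H) (A B : R) : Prop :=
  [/\ gf_family F Lam v, GBplus T /\ GBplus U, 0 < A, A <= B &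
      forall f : H, cintegrable mu (gff_integrand F Lam v T U f f) /\
        RtoC (A * hnorm f ^+ 2) <= cint mu (gff_integrand F Lam v T U f f)
          <= RtoC (B * hnorm f ^+ 2)].

(* S is the frame operator: <S f, g> = int v^2 <T^* P Lam^* Lam P U f, g>
   = int v^2 <Lam P U f, Lam P T g>  (T = T^* as T is positive) *)
Definition is_frame_op (R : realType) (H : hilbert R) d (X : measurableType d)
    (mu : {measure set X -> \bar R})
    (K : X -> hilbert R) (F : X -> set H) (Lam : forall x, H -> K x)
    (v : X -> R) (T U : H -> H) (S : H -> H) : Prop :=
  forall f g : H, pip (S f) g = cint mu (gff_integrand F Lam v T U f g).

From HB Require Import structures.
From mathcomp Require Import all_boot all_order all_algebra.
From mathcomp Require Import all_classical all_reals all_analysis.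
From mathcomp Require Import complex.
From mathcomp Require Import ring lra.
Set Implicit Arguments.
Unset Strict Implicit.
Unset Printing Implicit Defensive.
Import Order.TTheory GRing.Theory Num.Theory.
Local Open Scope complex_scope.
Local Open Scope ring_scope.
Local Open Scope classical_set_scope.

(* The integrand of the canonical dual at f is the original integrand at S_C^-1 f: S_C^-1 is
   self-adjoint and commutes with T and U, and P_F(x) S_C^-1 P_(S_C^-1 F(x)) = P_F(x) S_C^-1.
   Hence the left-hand side equals |<(S_C - S_C') a, b>| with a = S_C^-1 f, b = S_C'^-1 f.
   The hypothesis bounds the hermitian form <(S_C - S_C') ., .> by D on the diagonal, so
   polarization gives |<(S_C - S_C') x, y>| <= D (||x||^2 + ||y||^2) / 2.  Taking x = A_1 a and
   y = A_2 b, and using ||S^-1 f|| <= ||f|| / A for a frame operator with lower bound A,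
   gives A_1 A_2 |<(S_C - S_C') a, b>| <= D ||f||^2. *)

Section Sesquilinear.
Variables (R : realType) (V : lmodType R[i]) (b : V -> V -> R[i]).
Hypothesis linl : forall (a : R[i]) x y z, b (a *: x + y) z = a * b x z + b y z.
Hypothesis linr : forall (a : R[i]) x y z, b z (a *: x + y) = a^* * b z x + b z y.

Lemma sesq0l z : b 0 z = 0.
Proof.
have := linl 1 0 0 z; rewrite scaler0 addr0 mul1r => h.
by apply: (addrI (b 0 z)); rewrite addr0 -h.
Qed.

Lemma sesq0r z : b z 0 = 0.
Proof.
have := linr 1 0 0 z; rewrite scaler0 addr0 rmorph1 mul1r => h.
by apply: (addrI (b z 0)); rewrite addr0 -h.
Qed.

Lemma sesqDl x y z : b (x + y) z = b x z + b y z.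
Proof. by have := linl 1 x y z; rewrite scale1r mul1r. Qed.

Lemma sesqZl a x z : b (a *: x) z = a * b x z.
Proof. by have := linl a x 0 z; rewrite addr0 sesq0l addr0. Qed.

Lemma sesqNl x z : b (- x) z = - b x z.
Proof. by rewrite -scaleN1r sesqZl mulN1r. Qed.

Lemma sesqBl x y z : b (x - y) z = b x z - b y z.
Proof. by rewrite sesqDl sesqNl. Qed.

Lemma sesqDr x y z : b z (x + y) = b z x + b z y.
Proof. by have := linr 1 x y z; rewrite scale1r rmorph1 mul1r. Qed.

Lemma sesqZr a x z : b z (a *: x) = a^* * b z x.
Proof. by have := linr a x 0 z; rewrite addr0 sesq0r addr0. Qed.

Lemma sesqNr x z : b z (- x) = - b z x.
Proof. by rewrite -scaleN1r sesqZr conjCN1 mulN1r. Qed.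

Lemma sesq_polarization f g :
  4 * b f g = b (f + g) (f + g) - b (f - g) (f - g)
    + 'i * b (f + 'i *: g) (f + 'i *: g) - 'i * b (f - 'i *: g) (f - 'i *: g).
Proof.
rewrite !(sesqDl, sesqNl, sesqDr, sesqNr, sesqZl, sesqZr) conjCi.
by ring: (@mulCii R[i]).
Qed.

Lemma sesq_hermitian : (forall g, complex.Im (b g g) = 0) -> forall f g, b g f = (b f g)^*.
Proof.
move=> diag f g; have e1 := diag (f + g); have e2 := diag (f + 'i *: g).
rewrite !(sesqDl, sesqDr, sesqZl, sesqZr) conjCi in e1 e2.
move: e1 e2 (diag f) (diag g).
case: (b f g) (b g f) (b f f) (b g g) => [p q] [r s] [u1 u2] [w1 w2] /= e1 e2 e3 e4.
by apply/eqP; rewrite eq_complex /=; apply/andP; split; apply/eqP; lra.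
Qed.

End Sesquilinear.

Definition sqnormc (R : realType) (c : R[i]) : R := complex.Re c ^+ 2 + complex.Im c ^+ 2.

Section SquaredModulus.
Variable R : realType.
Implicit Types c d : R[i].

Lemma RtoCE (r : R) : RtoC r = r%:C. Proof. by []. Qed.

Lemma realcM (r s : R) : (r * s)%:C = r%:C * s%:C :> R[i].
Proof. by rewrite rmorphM. Qed.

Lemma conjCM c d : (c * d)^* = c^* * d^*.
Proof. exact: rmorphM. Qed.

Lemma conjCR (r : R) : (r%:C)^* = r%:C :> R[i].
Proof. exact: conjc_real. Qed.

Lemma conjC_Im0 c : complex.Im c = 0 -> c^* = c.
Proof. by case: c => a b /= ->; apply/eqP; rewrite eq_complex /= oppr0 !eqxx. Qed.

Lemma sqnormcE c : c * c^* = (sqnormc c)%:C.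
Proof. by case: c => a b; rewrite /sqnormc /=; simpc; rewrite [b * a]mulrC addNr !expr2. Qed.

Lemma sqnormc_ge0 c : 0 <= sqnormc c.
Proof. by rewrite addr_ge0 // sqr_ge0. Qed.

Lemma sqnormc_eq0 c : sqnormc c = 0 -> c = 0.
Proof.
case: c => a b; rewrite /sqnormc /= => h.
by apply/eqP; rewrite eq_complex /=; apply/andP; split; rewrite -sqrf_eq0; apply/eqP; nra.
Qed.

Lemma sqnormcM c d : sqnormc (c * d) = sqnormc c * sqnormc d.
Proof. by case: c d => a b [a2 b2]; rewrite /sqnormc /=; ring. Qed.

Lemma sqnormcR (r : R) : sqnormc r%:C = r ^+ 2.
Proof. by rewrite /sqnormc /= expr0n addr0. Qed.

Lemma sqnormcJ c : sqnormc c^* = sqnormc c.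
Proof. by case: c => a b; rewrite /sqnormc /= sqrrN. Qed.

Lemma sqnormcD c d : sqnormc (c + d) <= 2 * sqnormc c + 2 * sqnormc d.
Proof.
case: c d => a b [a' b']; rewrite /sqnormc /=.
by have := sqr_ge0 (a - a'); have := sqr_ge0 (b - b'); nra.
Qed.

Lemma normc_sqnormc c : `|c| = (Num.sqrt (sqnormc c))%:C.
Proof. exact: normc_def. Qed.

End SquaredModulus.

Section InnerProduct.
Variables (R : realType) (H : preH R).
Implicit Types (x y z : H) (a : R[i]).

Lemma pip_linr a x y z : pip z (a *: x + y) = a^* * pip z x + pip z y.
Proof. by rewrite !(pip_conj z) pip_linl rmorphD rmorphM. Qed.

Lemma pip0l y : pip 0 y = 0. Proof. exact: (sesq0l (@pip_linl _ H)). Qed.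
Lemma pip0r y : pip y 0 = 0. Proof. exact: (sesq0r pip_linr). Qed.
Lemma pipDl x y z : pip (x + y) z = pip x z + pip y z. Proof. exact: (sesqDl (@pip_linl _ H)). Qed.
Lemma pipZl a x z : pip (a *: x) z = a * pip x z. Proof. exact: (sesqZl (@pip_linl _ H)). Qed.
Lemma pipNl x z : pip (- x) z = - pip x z. Proof. exact: (sesqNl (@pip_linl _ H)). Qed.
Lemma pipBl x y z : pip (x - y) z = pip x z - pip y z. Proof. exact: (sesqBl (@pip_linl _ H)). Qed.
Lemma pipDr x y z : pip z (x + y) = pip z x + pip z y. Proof. exact: (sesqDr pip_linr). Qed.
Lemma pipZr a x z : pip z (a *: x) = a^* * pip z x. Proof. exact: (sesqZr pip_linr). Qed.
Lemma pipNr x z : pip z (- x) = - pip z x. Proof. exact: (sesqNr pip_linr). Qed.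

Lemma pip_sym0 x y : pip x y = 0 -> pip y x = 0.
Proof. by move=> h; rewrite pip_conj h rmorph0. Qed.

Definition sqnorm x : R := complex.Re (pip x x).

Lemma pip_diag x : pip x x = (sqnorm x)%:C.
Proof. by have := ger0_Im (pip_ge0 x); rewrite /sqnorm; case: (pip x x) => a b /= ->. Qed.

Lemma sqnorm_ge0 x : 0 <= sqnorm x.
Proof. by have := pip_ge0 x; rewrite pip_diag lecR. Qed.

Lemma sqnorm_eq0 x : sqnorm x = 0 -> x = 0.
Proof. by move=> h; apply: pip_eq0; rewrite pip_diag h. Qed.

Lemma sqnorm_gt0 x : sqnorm x != 0 -> 0 < sqnorm x.
Proof. by rewrite lt0r sqnorm_ge0 andbT. Qed.

Lemma hnorm_sqr x : hnorm x ^+ 2 = sqnorm x.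
Proof. by rewrite /hnorm sqr_sqrtr // sqnorm_ge0. Qed.

Lemma sqnorm0 : sqnorm (0 : H) = 0.
Proof. by rewrite /sqnorm pip0l. Qed.

Lemma sqnormZ a x : sqnorm (a *: x) = sqnormc a * sqnorm x.
Proof. by apply: complexI; rewrite realcM -sqnormcE -!pip_diag pipZl pipZr; ring. Qed.

Lemma sqnormN x : sqnorm (- x) = sqnorm x.
Proof. by rewrite /sqnorm pipNl pipNr opprK. Qed.

Lemma sqnormD x y : sqnorm (x + y) = sqnorm x + 2 * complex.Re (pip x y) + sqnorm y.
Proof.
rewrite /sqnorm pipDl !pipDr [pip y x]pip_conj !raddfD /=.
by case: (pip x y) => p q /=; ring.
Qed.

Lemma sqnormB x y : sqnorm (x - y) = sqnorm x - 2 * complex.Re (pip x y) + sqnorm y.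
Proof. by rewrite sqnormD sqnormN pipNr raddfN /=; ring. Qed.

Lemma parallelogram x y : sqnorm (x + y) + sqnorm (x - y) = 2 * sqnorm x + 2 * sqnorm y.
Proof. by rewrite sqnormD sqnormB; ring. Qed.

Lemma cauchy_schwarz x y : sqnormc (pip x y) <= sqnorm x * sqnorm y.
Proof.
have [y0|/sqnorm_gt0 hy] := eqVneq (sqnorm y) 0.
  by rewrite (sqnorm_eq0 y0) pip0r sqnorm0 mulr0 /sqnormc /= expr0n /= addr0.
set c := pip x y.
have := sqnorm_ge0 ((sqnorm y)%:C *: x - c *: y).
rewrite sqnormB !sqnormZ pipZl pipZr -/c [c^* * c]mulrC sqnormcE -rmorphM /= sqnormcR => h.
have : 0 <= sqnorm y * (sqnorm x * sqnorm y - sqnormc c) by nra.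
by rewrite pmulr_rge0 // subr_ge0.
Qed.

Lemma sqnorm_sub_component u g : 0 < sqnorm g ->
  sqnorm (u - (pip u g / (sqnorm g)%:C) *: g) = sqnorm u - sqnormc (pip u g) / sqnorm g.
Proof.
move=> hg; set c := pip u g; set n := sqnorm g.
have binv : (n%:C)^-1 = (n^-1)%:C by rewrite fmorphV.
have ct : (c / n%:C)^* * c = (sqnormc c / n)%:C.
  by rewrite binv conjCM conjCR mulrC mulrA sqnormcE -realcM.
rewrite sqnormB sqnormZ pipZr ct sqnormcM binv sqnormcR /=.
by rewrite -/n; field; rewrite gt_eqF.
Qed.

End InnerProduct.

Lemma unit_phase (R : realType) (z : R[i]) :
  exists2 c, sqnormc c = 1 & c * z = (Num.sqrt (sqnormc z))%:C.
Proof.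
have [->|nz] := eqVneq z 0.
  by exists 1; rewrite ?sqnormcR ?expr1n // mulr0 /sqnormc /= expr0n sqrtr0.
have zpos : 0 < sqnormc z.
  by rewrite lt0r sqnormc_ge0 andbT; apply: contra_neq nz; apply: sqnormc_eq0.
set s := Num.sqrt (sqnormc z).
have s0 : 0 < s by rewrite sqrtr_gt0.
have ss : s ^+ 2 = sqnormc z by rewrite sqr_sqrtr // ltW.
have sinv : (s%:C)^-1 = (s^-1)%:C :> R[i] by rewrite fmorphV.
exists (z^* / s%:C).
  by rewrite sqnormcM sinv sqnormcJ sqnormcR -ss -exprMn mulfV ?expr1n // gt_eqF.
rewrite mulrAC [z^* * z]mulrC sqnormcE -ss expr2 realcM -mulrA divff ?mulr1 //.
by apply/eqP => /(congr1 (@complex.Re R)) /= s_eq0; move: s0; rewrite s_eq0 ltxx.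
Qed.

Section HermitianFormBound.
Variables (R : realType) (H : preH R) (b : H -> H -> R[i]) (D : R).
Hypothesis linl : forall (a : R[i]) x y z, b (a *: x + y) z = a * b x z + b y z.
Hypothesis linr : forall (a : R[i]) x y z, b z (a *: x + y) = a^* * b z x + b z y.
Hypothesis diag_real : forall g, complex.Im (b g g) = 0.
Hypothesis diag_bound : forall g, `|complex.Re (b g g)| <= D * sqnorm g.

Lemma hermitian_form_bound x y :
  Num.sqrt (sqnormc (b x y)) <= D * (sqnorm x + sqnorm y) / 2.
Proof.
(* Rotating x by a unit phase makes b x y the real number s = |b x y|, and then
   b (u + y) (u + y) - b (u - y) (u - y) = 4 s. *)
have [c c1 cz] := unit_phase (b x y); set s := Num.sqrt _ in cz.
set u := c *: x.
have buy : b u y = s%:C by rewrite sesqZl.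
have byu : b y u = s%:C by rewrite (sesq_hermitian linl linr diag_real) buy conjCR.
have nu : sqnorm u = sqnorm x by rewrite sqnormZ c1 mul1r.
have diff : b (u + y) (u + y) - b (u - y) (u - y) = s%:C *+ 4.
  rewrite !(sesqDl linl, sesqNl linl, sesqDr linr, sesqNr linr) buy byu.
  by rewrite -mulr_natr; ring.
have := congr1 (@complex.Re R) diff; rewrite raddfB raddfMn /= => {}diff.
have bp := le_trans (ler_norm _) (diag_bound (u + y)).
have bm : - complex.Re (b (u - y) (u - y)) <= D * sqnorm (u - y).
  by apply: le_trans (diag_bound (u - y)); rewrite -normrN ler_norm.
have par : D * sqnorm (u + y) + D * sqnorm (u - y) = 2 * (D * sqnorm x) + 2 * (D * sqnorm y).
  by rewrite -mulrDr parallelogram nu; ring.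
rewrite -/s mulrDr -mulr_natl in diff *; lra.
Qed.
End HermitianFormBound.

Lemma real_eq0 (R : realType) (x : R) : 0 <= x -> (forall e, 0 < e -> x < e) -> x = 0.
Proof.
move=> x0 small; apply/eqP; rewrite eq_le x0 andbT leNgt; apply/negP => xpos.
by have := small x xpos; rewrite ltxx.
Qed.

Lemma invS_lt (R : realType) (e : R) : 0 < e ->
  exists N : nat, forall n, (N <= n)%N -> (n.+1%:R : R)^-1 < e.
Proof.
move=> e0; have ei : 0 <= e^-1 by rewrite invr_ge0 ltW.
exists (Num.Def.archi_bound e^-1) => n hn.
rewrite -(invrK e) ltf_pV2 ?posrE ?invr_gt0 ?ltr0n //.
by apply: lt_le_trans (archi_boundP ei) _; rewrite ler_nat; exact: leqW.
Qed.

Lemma invS_le (R : realType) (N n : nat) : (N <= n)%N -> (n.+1%:R : R)^-1 <= (N.+1%:R)^-1.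
Proof. by move=> h; rewrite lef_pV2 ?posrE ?ltr0n // ler_nat ltnS. Qed.

Section HilbertSequences.
Variables (R : realType) (H : hilbert R).

Lemma hconv_sqnorm (u : nat -> H) l : hconv u l ->
  forall e : R, 0 < e -> exists N : nat, forall n, (N <= n)%N -> sqnorm (u n - l) < e.
Proof.
move=> hc e e0; have se : 0 < Num.sqrt e by rewrite sqrtr_gt0.
have [N hN] := hc _ se.
by exists N => n /hN; rewrite /hnorm ltr_sqrt.
Qed.

Lemma hcauchy_sqnorm (u : nat -> H) :
  (forall e : R, 0 < e -> exists N : nat, forall m n, (N <= m)%N -> (N <= n)%N ->
       sqnorm (u m - u n) < e) -> hcauchy u.
Proof.
move=> h e e0; have [N hN] := h (e ^+ 2) (exprn_gt0 _ e0).
exists N => m n hm hn; have := hN m n hm hn.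
by rewrite /hnorm -ltr_sqrt ?exprn_gt0 // sqrtr_sqr gtr0_norm.
Qed.

End HilbertSequences.

Section Projection.
Variables (R : realType) (H : hilbert R) (M : set H).
Hypothesis hM : closed_subspace M.
Implicit Types (f g m p q : H) (a : R[i]).

Lemma subspace0 : M 0. Proof. by case: hM. Qed.
Lemma subspaceL a f g : M f -> M g -> M (a *: f + g). Proof. by case: hM => _ + _; apply. Qed.
Lemma subspaceD f g : M f -> M g -> M (f + g).
Proof. by move=> Mf Mg; have := subspaceL 1 Mf Mg; rewrite scale1r. Qed.
Lemma subspaceZ a f : M f -> M (a *: f).
Proof. by move=> Mf; have := subspaceL a Mf subspace0; rewrite addr0. Qed.
Lemma subspaceB f g : M f -> M g -> M (f - g).
Proof. by move=> Mf Mg; rewrite -scaleN1r addrC; apply: subspaceL. Qed.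
Lemma subspace_lim (u : nat -> H) l : (forall n, M (u n)) -> hconv u l -> M l.
Proof. by case: hM => _ _; apply. Qed.

Section Minimizing.
Variables (f : H) (d : R).
Hypothesis d_lb : forall m, M m -> d <= sqnorm (f - m).

Lemma sqnormc_pip_le_excess q g : M q -> M g ->
  sqnormc (pip (f - q) g) <= sqnorm g * (sqnorm (f - q) - d).
Proof.
move=> Mq Mg; have [g0|/sqnorm_gt0 gpos] := eqVneq (sqnorm g) 0.
  by rewrite (sqnorm_eq0 g0) pip0r sqnorm0 mul0r /sqnormc /= expr0n /= addr0.
set c := pip (f - q) g.
have Mq' : M (q + (c / (sqnorm g)%:C) *: g) by apply: subspaceD => //; apply: subspaceZ.
have := d_lb Mq'; rewrite opprD addrA sqnorm_sub_component // -/c => le_d.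
rewrite -(ler_pM2l gpos) mulrBr mulrCA mulfV ?gt_eqF // mulr1 in le_d.
by rewrite mulrBr; lra.
Qed.

Lemma minimizing_cauchy (m : nat -> H) :
  (forall n, M (m n) /\ sqnorm (f - m n) < d + (n.+1%:R)^-1) -> hcauchy m.
Proof.
move=> mmin; apply: hcauchy_sqnorm => e e0.
have [N hN] := invS_lt (divr_gt0 e0 (ltr0n _ 4)).
exists N => k n hk hn.
have [Mk fk] := mmin k; have [Mn fn] := mmin n.
have Mmid : M ((2%:R^-1 : R[i]) *: (m k + m n)) by apply/subspaceZ/subspaceD.
have mid : (f - m k) + (f - m n) = (2%:R : R[i]) *: (f - (2%:R^-1 : R[i]) *: (m k + m n)).
  by rewrite scalerBr scalerA mulfV ?pnatr_eq0 // scale1r scaler_nat mulr2n addrACA opprD.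
have sub : (f - m k) - (f - m n) = - (m k - m n) by rewrite opprB addrC addrA subrK opprB.
have sq2 : sqnormc (2%:R : R[i]) = 4 by rewrite /sqnormc /=; ring.
have := parallelogram (f - m k) (f - m n); rewrite mid sub sqnormZ sqnormN sq2.
have := d_lb Mmid; have := @invS_le R _ _ hk; have := @invS_le R _ _ hn.
have := hN N (leqnn N); move: fk fn.
move: (k.+1%:R : R)^-1 (n.+1%:R : R)^-1 (N.+1%:R : R)^-1 => ik in_ iN; lra.
Qed.

End Minimizing.

Lemma orth_proj_exists f : exists p, M p /\ forall g, M g -> pip (f - p) g = 0.
Proof.
pose E := [set r | exists m, M m /\ r = sqnorm (f - m)].
have E0 : E !=set0 by exists (sqnorm (f - 0)), 0; split => //; exact: subspace0.
have Elb : has_lbound E by exists 0 => r [m [_ ->]]; exact: sqnorm_ge0.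
set d := inf E.
have d_lb m : M m -> d <= sqnorm (f - m) by move=> Mm; apply: (ge_inf Elb); exists m.
have approx (n : nat) : exists m, M m /\ sqnorm (f - m) < d + (n.+1%:R)^-1.
  have n0 : 0 < (n.+1%:R : R)^-1 by rewrite invr_gt0 ltr0n.
  have [_ [m [Mm ->]] lt_m] := inf_adherent n0 (conj E0 Elb).
  by exists m.
have [m mmin] := choice approx.
have [p mp] := hcomplete (minimizing_cauchy d_lb mmin).
have Mp : M p by apply: (subspace_lim _ mp) => n; case: (mmin n).
exists p; split => // g Mg.
have [g0|/sqnorm_gt0 gpos] := eqVneq (sqnorm g) 0; first by rewrite (sqnorm_eq0 g0) pip0r.
apply: sqnormc_eq0; apply: real_eq0 (sqnormc_ge0 _) _ => e e0.
set q := e / (4 * sqnorm g).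
have q0 : 0 < q by rewrite divr_gt0 // mulr_gt0.
have gq : sqnorm g * q = e / 4 by rewrite /q; field; rewrite gt_eqF.
have [N1 hN1] := invS_lt q0; have [N2 hN2] := hconv_sqnorm mp q0.
set n := maxn N1 N2; have [Mn fn] := mmin n.
have b1 : sqnormc (pip (f - m n) g) < e / 4.
  apply: le_lt_trans (sqnormc_pip_le_excess d_lb Mn Mg) _.
  rewrite -gq ltr_pM2l //; move: fn (hN1 n (leq_maxl _ _)); move: (n.+1%:R : R)^-1 => i; lra.
have b2 : sqnormc (pip (m n - p) g) < e / 4.
  apply: le_lt_trans (cauchy_schwarz _ _) _.
  by rewrite -gq mulrC ltr_pM2l //; apply: hN2; exact: leq_maxr.
have -> : f - p = (f - m n) + (m n - p) by rewrite addrA subrK.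
by rewrite pipDl; apply: le_lt_trans (sqnormcD _ _) _; lra.
Qed.

Local Notation P := (orth_proj M).

Lemma orth_proj_in f : M (P f).
Proof. by have [] := xgetPex 0 (orth_proj_exists f). Qed.

Lemma orth_proj_orth f g : M g -> pip (f - P f) g = 0.
Proof. by have [_] := xgetPex 0 (orth_proj_exists f); apply. Qed.

Lemma orth_proj_uniq f p : M p -> (forall g, M g -> pip (f - p) g = 0) -> P f = p.
Proof.
move=> Mp p_orth; apply/eqP; rewrite -subr_eq0; apply/eqP; apply: pip_eq0.
have MPp : M (P f - p) by apply: subspaceB => //; exact: orth_proj_in.
have e : P f - p = (f - p) - (f - P f).
  by rewrite [in RHS]opprB [in RHS]addrC [in RHS]addrA subrK.
by rewrite {1}e pipBl p_orth // orth_proj_orth // subr0.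
Qed.

Lemma orth_projL a f g : P (a *: f + g) = a *: P f + P g.
Proof.
apply: orth_proj_uniq => [|h Mh]; first by apply: subspaceL; exact: orth_proj_in.
have -> : a *: f + g - (a *: P f + P g) = a *: (f - P f) + (g - P g).
  by rewrite scalerBr opprD addrACA.
by rewrite pipDl pipZl !orth_proj_orth // mulr0 addr0.
Qed.

Lemma mem_orth_orth f : (forall q, (forall g, M g -> pip q g = 0) -> pip f q = 0) -> M f.
Proof.
move=> orth2; have fP_orth := orth_proj_orth f.
have Pf_orth : pip (P f) (f - P f) = 0 by apply: pip_sym0; apply/fP_orth/orth_proj_in.
have : pip (f - P f) (f - P f) = 0 by rewrite pipBl (orth2 _ fP_orth) Pf_orth subrr.
by move/pip_eq0/eqP; rewrite subr_eq0 => /eqP ->; exact: orth_proj_in.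
Qed.

End Projection.

Section LinearMap.
Variables (R : realType) (V W : lmodType R[i]) (L : V -> W).
Hypothesis L_lin : forall (a : R[i]) x y, L (a *: x + y) = a *: L x + L y.

Lemma lin0 : L 0 = 0.
Proof.
have := L_lin 1 0 0; rewrite scaler0 addr0 scale1r => h.
by apply: (addrI (L 0)); rewrite addr0 -h.
Qed.

Lemma linD x y : L (x + y) = L x + L y.
Proof. by have := L_lin 1 x y; rewrite !scale1r. Qed.

End LinearMap.

Definition coercive_selfadjoint (R : realType) (H : preH R) (S : H -> H) (A : R) : Prop :=
  [/\ forall (a : R[i]) f g, S (a *: f + g) = a *: S f + S g,
      forall f g, pip (S f) g = pip f (S g) &
      forall f, A * sqnorm f <= complex.Re (pip (S f) f)].

Section CoerciveSelfadjoint.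
Variables (R : realType) (H : preH R) (S Si : H -> H) (A : R).
Hypotheses (hS : coercive_selfadjoint S A) (A_gt0 : 0 < A).
Hypotheses (SK : cancel S Si) (SiK : cancel Si S).

Lemma selfadjoint_diag_real f : complex.Im (pip (S f) f) = 0.
Proof.
have [_ S_adj _] := hS; have := S_adj f f; rewrite [RHS]pip_conj.
by case: (pip (S f) f) => p q [] /eqP; rewrite -subr_eq0 opprK -mulr2n mulrn_eq0 => /eqP.
Qed.

Lemma inv_linear (a : R[i]) f g : Si (a *: f + g) = a *: Si f + Si g.
Proof. by have [S_lin _ _] := hS; apply: (can_inj SK); rewrite SiK S_lin !SiK. Qed.

Lemma inv_adjoint f g : pip (Si f) g = pip f (Si g).
Proof. by have [_ S_adj _] := hS; rewrite -{1}(SiK g) -S_adj SiK. Qed.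

Lemma pip_inv_real f : complex.Im (pip f (Si f)) = 0.
Proof. by have := selfadjoint_diag_real (Si f); rewrite SiK. Qed.

Lemma inv_sqnorm_le f : A ^+ 2 * sqnorm (Si f) <= sqnorm f.
Proof.
have [_ _ S_coer] := hS; have := S_coer (Si f); rewrite SiK => coer.
have cs := cauchy_schwarz f (Si f).
rewrite /sqnormc pip_inv_real expr0n /= addr0 in cs.
have [z|/sqnorm_gt0 npos] := eqVneq (sqnorm (Si f)) 0; first by rewrite z mulr0 sqnorm_ge0.
have : (A * sqnorm (Si f)) ^+ 2 <= sqnorm f * sqnorm (Si f).
  apply: le_trans cs; rewrite ler_sqr ?nnegrE ?mulr_ge0 ?(ltW A_gt0) ?sqnorm_ge0 //.
  by apply: le_trans coer; rewrite mulr_ge0 ?(ltW A_gt0) ?sqnorm_ge0.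
by rewrite exprMn expr2 mulrA ler_pM2r.
Qed.

End CoerciveSelfadjoint.

Section InverseDifference.
Variables (R : realType) (H : preH R) (S1 S1i S2 S2i : H -> H) (A1 A2 D : R).
Hypotheses (hS1 : coercive_selfadjoint S1 A1) (hS2 : coercive_selfadjoint S2 A2).
Hypotheses (A1_gt0 : 0 < A1) (A2_gt0 : 0 < A2) (D_ge0 : 0 <= D).
Hypotheses (S1iK : cancel S1i S1) (S2iK : cancel S2i S2).
Hypothesis close : forall f, `|pip (S1 f) f - pip (S2 f) f| <= (D * sqnorm f)%:C.

Let E x y := pip (S1 x) y - pip (S2 x) y.

Let E_linl (a : R[i]) x y z : E (a *: x + y) z = a * E x z + E y z.
Proof.
have [lin1 _ _] := hS1; have [lin2 _ _] := hS2.
by rewrite /E lin1 lin2 !pip_linl; ring.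
Qed.

Let E_linr (a : R[i]) x y z : E z (a *: x + y) = a^* * E z x + E z y.
Proof. by rewrite /E !pip_linr; ring. Qed.

Let E_diag_real g : complex.Im (E g g) = 0.
Proof. by rewrite /E raddfB /= (selfadjoint_diag_real hS1) (selfadjoint_diag_real hS2) subr0. Qed.

Let E_diag_bound g : `|complex.Re (E g g)| <= D * sqnorm g.
Proof.
have := close g; rewrite -/(E g g) normc_sqnormc lecR /sqnormc E_diag_real.
by rewrite expr0n addr0 sqrtr_sqr.
Qed.

Lemma inverse_difference_bound f :
  `|pip f (S1i f) - pip f (S2i f)| <= (D / (A1 * A2) * sqnorm f)%:C.
Proof.
set a := S1i f; set b := S2i f.
have fa : pip f a = pip (S2 a) b.
  have [_ adj2 _] := hS2; rewrite [pip (S2 a) b]pip_conj -adj2 /b S2iK.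
  by rewrite conjC_Im0 // (pip_inv_real hS1 S1iK).
have fb : pip f b = pip (S1 a) b by rewrite /a S1iK.
rewrite fa fb -opprB normrN -/(E a b) normc_sqnormc lecR.
have := hermitian_form_bound E_linl E_linr E_diag_real E_diag_bound (A1%:C *: a) (A2%:C *: b).
rewrite (sesqZl E_linl) (sesqZr E_linr) conjCR mulrA -realcM sqnormcM !sqnormZ !sqnormcR.
have A12 : 0 < A1 * A2 by rewrite mulr_gt0.
rewrite sqrtrM ?sqr_ge0 // sqrtr_sqr gtr0_norm // => bnd.
have ha := inv_sqnorm_le hS1 A1_gt0 S1iK f; have hb := inv_sqnorm_le hS2 A2_gt0 S2iK f.
have : D * (A1 ^+ 2 * sqnorm a + A2 ^+ 2 * sqnorm b) <= D * (sqnorm f + sqnorm f).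
  by apply: ler_wpM2l => //; lra.
rewrite -mulrA mulrCA ler_pdivlMl // mulrDr; lra.
Qed.
End InverseDifference.

Section ComplexIntegral.
Variables (R : realType) (d : measure_display) (X : measurableType d)
  (mu : {measure set X -> \bar R}).
Implicit Types (h : X -> R[i]).

Lemma ReM (c z : R[i]) :
  complex.Re (c * z) = complex.Re c * complex.Re z - complex.Im c * complex.Im z.
Proof. by case: c z => a b [p q]. Qed.

Lemma ImM (c z : R[i]) :
  complex.Im (c * z) = complex.Re c * complex.Im z + complex.Im c * complex.Re z.
Proof. by case: c z => a b [p q]. Qed.

Let integrableZ (r : R) (u : X -> R) : mu.-integrable setT (EFin \o u) ->
  mu.-integrable setT (EFin \o (fun x => r * u x)).
Proof.
move=> iu; have := integrableZl measurableT r iu.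
by congr (_.-integrable _ _); apply: funext => x; rewrite /= EFinM.
Qed.

Lemma cintegrableD h1 h2 : cintegrable mu h1 -> cintegrable mu h2 ->
  cintegrable mu (fun x => h1 x + h2 x).
Proof.
move=> [r1 i1] [r2 i2]; split.
- rewrite (_ : (fun x => _) = ((fun x => (complex.Re (h1 x))%:E) \+
                               (fun x => (complex.Re (h2 x))%:E))%E).
    exact: integrableD.
  by apply: funext => x /=; rewrite raddfD.
- rewrite (_ : (fun x => _) = ((fun x => (complex.Im (h1 x))%:E) \+
                               (fun x => (complex.Im (h2 x))%:E))%E).
    exact: integrableD.
  by apply: funext => x /=; rewrite raddfD.
Qed.

Lemma cintegrableZ (c : R[i]) h : cintegrable mu h -> cintegrable mu (fun x => c * h x).
Proof.
move=> [r1 i1]; split.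
- rewrite (_ : (fun x => _) = (fun x => ((complex.Re c)%:E * (complex.Re (h x))%:E)
                             - ((complex.Im c)%:E * (complex.Im (h x))%:E))%E).
    by apply: integrableB => //; apply: integrableZl.
  by apply: funext => x /=; rewrite ReM.
- rewrite (_ : (fun x => _) = ((fun x => (complex.Re c)%:E * (complex.Im (h x))%:E) \+
                               (fun x => (complex.Im c)%:E * (complex.Re (h x))%:E))%E).
    by apply: integrableD => //; apply: integrableZl.
  by apply: funext => x /=; rewrite ImM.
Qed.

Lemma cintD h1 h2 : cintegrable mu h1 -> cintegrable mu h2 ->
  cint mu (fun x => h1 x + h2 x) = cint mu h1 + cint mu h2.
Proof.
move=> [r1 i1] [r2 i2]; rewrite /cint.
have -> : (fun x => complex.Re (h1 x + h2 x)) =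
          (fun x => complex.Re (h1 x) + complex.Re (h2 x)) by apply: funext => x; rewrite raddfD.
have -> : (fun x => complex.Im (h1 x + h2 x)) =
          (fun x => complex.Im (h1 x) + complex.Im (h2 x)) by apply: funext => x; rewrite raddfD.
by rewrite !RintegralD.
Qed.

Lemma cintZ (c : R[i]) h : cintegrable mu h -> cint mu (fun x => c * h x) = c * cint mu h.
Proof.
move=> [r1 i1]; rewrite /cint.
have -> : (fun x => complex.Re (c * h x)) =
   (fun x => complex.Re c * complex.Re (h x) - complex.Im c * complex.Im (h x)).
  by apply: funext => x; rewrite ReM.
have -> : (fun x => complex.Im (c * h x)) =
   (fun x => complex.Re c * complex.Im (h x) + complex.Im c * complex.Re (h x)).
  by apply: funext => x; rewrite ImM.
rewrite RintegralB ?RintegralD ?integrableZ // !RintegralZl //.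
by case: c => a b /=; simpc.
Qed.

Lemma cintB h1 h2 : cintegrable mu h1 -> cintegrable mu h2 ->
  cint mu (fun x => h1 x - h2 x) = cint mu h1 - cint mu h2.
Proof.
move=> c1 c2; under eq_fun do rewrite -mulN1r.
by rewrite cintD ?cintZ ?mulN1r //; apply: cintegrableZ.
Qed.

Lemma cintegrableB h1 h2 : cintegrable mu h1 -> cintegrable mu h2 ->
  cintegrable mu (fun x => h1 x - h2 x).
Proof.
move=> c1 c2; under eq_fun do rewrite -mulN1r.
by apply: cintegrableD => //; apply: cintegrableZ.
Qed.

End ComplexIntegral.

Section FrameOperator.
Variables (R : realType) (H : hilbert R) (d : measure_display) (X : measurableType d)
  (mu : {measure set X -> \bar R}) (K : X -> hilbert R) (v : X -> R) (T U : H -> H)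
  (F : X -> set H) (Lam : forall x, H -> K x) (A B : R) (S : H -> H).
Hypotheses (fr : cgf_frame mu F Lam v T U A B) (fo : is_frame_op mu F Lam v T U S).
Local Notation J := (gff_integrand F Lam v T U).

Lemma frame_integrand_linl x (a : R[i]) f f' g : J (a *: f + f') g x = a * J f g x + J f' g x.
Proof.
have [[F_cs Lam_b _ _ _] [_ [[U_lin _] _ _]] _ _ _] := fr.
by rewrite /gff_integrand U_lin (orth_projL (F_cs x)) (proj1 (Lam_b x)) pip_linl; ring.
Qed.

Lemma frame_integrand_linr x (a : R[i]) g g' f : J f (a *: g + g') x = a^* * J f g x + J f g' x.
Proof.
have [[F_cs Lam_b _ _ _] [[[T_lin _] _ _] _] _ _ _] := fr.
by rewrite /gff_integrand T_lin (orth_projL (F_cs x)) (proj1 (Lam_b x)) pip_linr; ring.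
Qed.

Lemma frame_diag f : cintegrable mu (J f f) /\
  RtoC (A * hnorm f ^+ 2) <= cint mu (J f f) <= RtoC (B * hnorm f ^+ 2).
Proof. by have [_ _ _ _] := fr; apply. Qed.

Lemma frame_integrand_integrable f g : cintegrable mu (J f g).
Proof.
have -> : J f g = fun x => 4^-1 * (J (f + g) (f + g) x - J (f - g) (f - g) x
    + 'i * J (f + 'i *: g) (f + 'i *: g) x - 'i * J (f - 'i *: g) (f - 'i *: g) x).
  apply: funext => x; rewrite -(sesq_polarization (frame_integrand_linl x)).
    by rewrite mulrA mulVf ?mul1r // pnatr_eq0.
  exact: frame_integrand_linr.
have [i1 _] := frame_diag (f + g); have [i2 _] := frame_diag (f - g).
have [i3 _] := frame_diag (f + 'i *: g); have [i4 _] := frame_diag (f - 'i *: g).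
apply/cintegrableZ/cintegrableB/cintegrableZ/i4.
by apply/cintegrableD/cintegrableZ/i3; apply: cintegrableB.
Qed.

Lemma frame_op_linl (a : R[i]) f f' g : pip (S (a *: f + f')) g = a * pip (S f) g + pip (S f') g.
Proof.
rewrite !fo (_ : J _ g = fun x => a * J f g x + J f' g x); last first.
  by apply: funext => x; rewrite frame_integrand_linl.
have [iJ iJ'] := (frame_integrand_integrable f g, frame_integrand_integrable f' g).
by rewrite cintD ?cintZ //; apply: cintegrableZ.
Qed.

Lemma frame_op_diag f : complex.Im (pip (S f) f) = 0 /\ A * sqnorm f <= complex.Re (pip (S f) f).
Proof.
have [_ /andP [+ _]] := frame_diag f; rewrite lecE -fo -hnorm_sqr => /andP [/eqP ? ?].
by split.
Qed.

Lemma frame_op_coercive : coercive_selfadjoint S A.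
Proof.
have S_linr (a : R[i]) f f' g : pip (S g) (a *: f + f') = a^* * pip (S g) f + pip (S g) f'.
  exact: pip_linr.
have herm := sesq_hermitian frame_op_linl S_linr (fun f => proj1 (frame_op_diag f)).
have S_adj f g : pip (S f) g = pip f (S g) by rewrite [RHS]pip_conj herm.
split=> // [a f f' | f]; last by have [] := frame_op_diag f.
apply/eqP; rewrite -subr_eq0; apply/eqP; apply: pip_eq0.
by rewrite pipBl frame_op_linl pipDl pipZl subrr.
Qed.

End FrameOperator.

Section SelfadjointSubspace.
Variables (R : realType) (H : hilbert R) (S : H -> H) (M : set H).
Hypothesis S_lin : forall (a : R[i]) f g, S (a *: f + g) = a *: S f + S g.
Hypothesis S_adj : forall f g, pip (S f) g = pip f (S g).
Hypothesis hM : closed_subspace M.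

Lemma closed_subspace_preimage : closed_subspace (S @^-1` M).
Proof.
split=> [|a f g Mf Mg|u l Mu ul]; rewrite /preimage /=.
- by rewrite (lin0 S_lin); exact: subspace0.
- by rewrite S_lin; apply: subspaceL.
apply: (mem_orth_orth hM) => q q_orth; rewrite S_adj.
have u_orth n : pip (u n) (S q) = 0 by rewrite -S_adj; apply: pip_sym0; apply: q_orth; exact: Mu.
have [Sq0|/sqnorm_gt0 Sq_pos] := eqVneq (sqnorm (S q)) 0; first by rewrite (sqnorm_eq0 Sq0) pip0r.
apply: sqnormc_eq0; apply: real_eq0 (sqnormc_ge0 _) _ => e e0.
have [N hN] := hconv_sqnorm ul (divr_gt0 e0 Sq_pos).
have -> : pip l (S q) = pip (l - u N) (S q) by rewrite pipBl u_orth subr0.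
apply: le_lt_trans (cauchy_schwarz _ _) _.
by rewrite -ltr_pdivlMr // -sqnormN opprB; apply: hN.
Qed.

End SelfadjointSubspace.

Lemma image_cancel_preimage (T : Type) (S Si : T -> T) (M : set T) :
  cancel S Si -> cancel Si S -> Si @` M = S @^-1` M.
Proof.
move=> SK SiK; apply/seteqP; split=> [_ [m Mm <-]|f Mf]; first by rewrite /preimage /= SiK.
by exists (S f); rewrite ?SK.
Qed.

Section AdjointProjection.
Variables (R : realType) (H : hilbert R) (Si : H -> H) (M : set H).
Hypothesis Si_lin : forall (a : R[i]) f g, Si (a *: f + g) = a *: Si f + Si g.
Hypothesis Si_adj : forall f g, pip (Si f) g = pip f (Si g).
Hypotheses (hM : closed_subspace M) (hSiM : closed_subspace (Si @` M)).

Lemma orth_proj_adjoint_image h :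
  orth_proj M (Si (orth_proj (Si @` M) h)) = orth_proj M (Si h).
Proof.
set p := orth_proj (Si @` M) h.
have -> : Si h = Si p + Si (h - p) by rewrite -(linD Si_lin) addrC subrK.
rewrite (linD (orth_projL hM)); suff -> : orth_proj M (Si (h - p)) = 0 by rewrite addr0.
apply: (orth_proj_uniq hM) => [|g Mg]; first exact: subspace0.
by rewrite subr0 Si_adj; apply: (orth_proj_orth hSiM); exists g.
Qed.

End AdjointProjection.

Section CanonicalDual.
Variables (R : realType) (H : hilbert R) (d : measure_display) (X : measurableType d)
  (mu : {measure set X -> \bar R}) (K : X -> hilbert R) (v : X -> R) (T U : H -> H)
  (F : X -> set H) (Lam : forall x, H -> K x) (A B : R) (S Si : H -> H).
Hypotheses (fr : cgf_frame mu F Lam v T U A B) (fo : is_frame_op mu F Lam v T U S).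
Hypotheses (SK : cancel S Si) (SiK : cancel Si S).
Hypotheses (SiT : forall f, Si (T f) = T (Si f)) (SiU : forall f, Si (U f) = U (Si f)).

Lemma canonical_dual_integrand f x :
  gff_integrand (fun x => Si @` F x) (fun x h => Lam x (orth_proj (F x) (Si h))) v T U f f x
  = gff_integrand F Lam v T U (Si f) (Si f) x.
Proof.
have [[F_cs _ _ _ _] _ _ _ _] := fr; have [S_lin S_adj _] := frame_op_coercive fr fo.
have hSiF : closed_subspace (Si @` F x).
  by rewrite (image_cancel_preimage _ SK SiK); exact: closed_subspace_preimage S_lin S_adj (F_cs x).
have Si_lin := inv_linear (frame_op_coercive fr fo) SK SiK.
have Si_adj := inv_adjoint (frame_op_coercive fr fo) SiK.
by rewrite /gff_integrand !(orth_proj_adjoint_image Si_lin Si_adj (F_cs x) hSiF) SiT SiU.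
Qed.

End CanonicalDual.

Theorem theorem4p2 (R : realType) (H : hilbert R) (d : measure_display)
    (X : measurableType d) (mu : {measure set X -> \bar R})
    (K : X -> hilbert R) (v : X -> R) (T U : H -> H)
    (F G : X -> set H) (Lam : forall x, H -> K x) (Gam : forall x, H -> K x)
    (A1 B1 A2 B2 : R) (SC SC' SCi SC'i : H -> H) :
  cgf_frame mu F Lam v T U A1 B1 ->
  cgf_frame mu G Gam v T U A2 B2 ->
  is_frame_op mu F Lam v T U SC ->
  is_frame_op mu G Gam v T U SC' ->
  cancel SC SCi -> cancel SCi SC ->
  cancel SC' SC'i -> cancel SC'i SC' ->
  (forall f, SCi (T f) = T (SCi f)) -> (forall f, SCi (U f) = U (SCi f)) ->
  (forall f, SC'i (T f) = T (SC'i f)) -> (forall f, SC'i (U f) = U (SC'i f)) ->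
  forall D : R, 0 < D ->
  (forall f : H,
     `| cint mu (fun x => gff_integrand F Lam v T U f f x
                          - gff_integrand G Gam v T U f f x) |
       <= RtoC (D * hnorm f ^+ 2)) ->
  let Xs := fun x => SCi @` F x in
  let Delta := fun x (h : H) => Lam x (orth_proj (F x) (SCi h)) in
  let Ys := fun x => SC'i @` G x in
  let Theta := fun x (h : H) => Gam x (orth_proj (G x) (SC'i h)) in
  forall f : H,
    `| cint mu (fun x => gff_integrand Xs Delta v T U f f x
                         - gff_integrand Ys Theta v T U f f x) |
      <= RtoC (D / (A1 * A2) * hnorm f ^+ 2).
Proof.
move=> fr1 fr2 fo1 fo2 SK SiK SK' SiK' SiT SiU SiT' SiU' D D_gt0 close Xs Delta Ys Theta f.
have [_ _ A1_gt0 _ _] := fr1; have [_ _ A2_gt0 _ _] := fr2.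
have cint_diff g h : cint mu (fun x => gff_integrand F Lam v T U g g x
    - gff_integrand G Gam v T U h h x) = pip (SC g) g - pip (SC' h) h.
  have i1 := frame_integrand_integrable fr1 g g; have i2 := frame_integrand_integrable fr2 h h.
  by rewrite cintB // fo1 fo2.
rewrite (_ : (fun x => _) = fun x => gff_integrand F Lam v T U (SCi f) (SCi f) x
    - gff_integrand G Gam v T U (SC'i f) (SC'i f) x); last first.
  apply: funext => x.
  by rewrite (canonical_dual_integrand fr1 fo1 SK SiK SiT SiU)
    (canonical_dual_integrand fr2 fo2 SK' SiK' SiT' SiU').
rewrite cint_diff SiK SiK' RtoCE hnorm_sqr.
apply: (inverse_difference_bound (frame_op_coercive fr1 fo1) (frame_op_coercive fr2 fo2)) => //.
  exact: ltW.
by move=> g; rewrite -cint_diff -hnorm_sqr -RtoCE; exact: close.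
Qed.
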